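(* For every integer $d\ge 2$, $\mathcal Q_d$ is dense in $\mathcal C_d$.
   Context: A polynomial knot is a map $\phi:\mathbb R\to\mathbb R^3$ with real polynomial components which is a smooth embedding ($\phi$ injective and $\phi'(t)\ne0$ for all $t$). For $d\ge2$, $\mathcal A_d$ is the set of polynomial maps $t\mapsto(f(t),g(t),h(t))$ with $\deg f\le d-2$, $\deg g\le d-1$, $\deg h\le d$, topologized via the bijection with Euclidean $\mathbb R^{3d}$ sending $(f,g,h)$ to its coefficient vector $(a_0,\dots,a_{d-2},b_0,\dots,b_{d-1},c_0,\dots,c_d)$, where $f=\sum a_it^i$, $g=\sum b_it^i$, $h=\sum c_it^i$. $\mathcal C_d\subseteq\mathcal A_d$ is the subspace of maps with $\deg f=d-2$, $\deg g=d-1$, $\deg h=d$ exactly, and $\mathcal Q_d$ is the set of polynomial knots in $\mathcal C_d$. *)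

From Stdlib Require Import Reals List.
Import ListNotations.
Open Scope R_scope.

(* A real polynomial sum_i l_i t^i is represented by its coefficient list
   [l_0; l_1; ...] (low degree first). Evaluation by Horner's scheme. *)
Definition peval (l : list R) (t : R) : R :=
  fold_right (fun c acc => c + t * acc) 0 l.

Definition pmap (a b c : list R) (t : R) : R * R * R :=
  (peval a t, peval b t, peval c t).

Definition is_polynomial_knot (a b c : list R) : Prop :=
  (forall s t : R, pmap a b c s = pmap a b c t -> s = t) /\
  (forall t : R,
     ~ (derivable_pt_lim (peval a) t 0 /\
        derivable_pt_lim (peval b) t 0 /\
        derivable_pt_lim (peval c) t 0)).

(* Membership in A_d: coefficient vectors (a_0..a_{d-2}, b_0..b_{d-1}, c_0..c_d),
   i.e. a point of R^{3d}. *)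
Definition in_A (d : nat) (a b c : list R) : Prop :=
  length a = (d - 1)%nat /\ length b = d /\ length c = (d + 1)%nat.

Definition in_C (d : nat) (a b c : list R) : Prop :=
  in_A d a b c /\
  nth (d - 2) a 0 <> 0 /\ nth (d - 1) b 0 <> 0 /\ nth d c 0 <> 0.

Definition in_Q (d : nat) (a b c : list R) : Prop :=
  in_C d a b c /\ is_polynomial_knot a b c.

Fixpoint sqdist (l1 l2 : list R) : R :=
  match l1, l2 with
  | x :: r, y :: s => (x - y) ^ 2 + sqdist r s
  | _, _ => 0
  end.

Definition dist3 (a b c a' b' c' : list R) : R :=
  sqrt (sqdist a a' + sqdist b b' + sqdist c c').

(* Subtracting [x] from the linear coefficient of a polynomial subtracts [x] from all its
   divided differences [(p s - p t) / (s - t)], extended by [p'] on the diagonal.  So the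
   perturbed map is a knot as soon as [(x1, x2, x3)] avoids the image of the plane under the
   divided-difference map of [(f, g, h)].  That map is locally Lipschitz from [R^2] to [R^3],
   so cutting a box into [N^2] small cells shows that its image meets at most [N^2] cubes
   of a grid of [M^3 > N^2] subcubes of any given cube: some subcube misses it.  Nesting such subcubes over the boxes [[-k, k]^2] gives a point, as
   close to the origin as desired, outside the whole image.  For [d = 2] the middle
   coordinate is affine with nonzero slope, so every map is already a knot. *)

From Stdlib Require Import Reals List Lra Lia ClassicalEpsilon.
Import ListNotations.
Open Scope R_scope.

(* For [p = c + X q]: [(p s - p t) / (s - t) = q s + t (q s - q t) / (s - t)]. *)
Fixpoint divdiff (l : list R) (s t : R) : R :=
  match l with
  | [] => 0
  | _ :: l' => peval l' s + t * divdiff l' s t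
  end.

Lemma divdiff_mul_sub (l : list R) (s t : R) :
  divdiff l s t * (s - t) = peval l s - peval l t.
Proof.
  induction l as [|c l IH]; simpl; [ring|].
  rewrite Rmult_plus_distr_r, Rmult_assoc, IH. unfold peval; simpl. ring.
Qed.

Lemma derivable_pt_lim_peval (l : list R) (t : R) :
  derivable_pt_lim (peval l) t (divdiff l t t).
Proof.
  induction l as [|c l IH].
  - apply derivable_pt_lim_const.
  - change (derivable_pt_lim (fun x => c + x * peval l x) t (divdiff (c :: l) t t)).
    replace (divdiff (c :: l) t t) with (0 + (1 * peval l t + t * divdiff l t t))
      by (simpl; ring).
    apply (derivable_pt_lim_plus (fun _ => c) (fun x => x * peval l x)).
    + apply derivable_pt_lim_const.
    + apply (derivable_pt_lim_mult id (peval l)); [apply derivable_pt_lim_id|exact IH].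
Qed.

Lemma divdiff_nonvanishing_knot (a b c : list R) :
  (forall s t, ~ (divdiff a s t = 0 /\ divdiff b s t = 0 /\ divdiff c s t = 0)) ->
  is_polynomial_knot a b c.
Proof.
  intro Hdd. split.
  - intros s t E. unfold pmap in E. injection E as Ea Eb Ec.
    destruct (Req_dec s t) as [|Hst]; [assumption|]. exfalso.
    assert (Hzero : forall l, peval l s = peval l t -> divdiff l s t = 0).
    { intros l El. pose proof (divdiff_mul_sub l s t) as D.
      rewrite El, Rminus_diag in D.
      destruct (Rmult_integral _ _ D) as [|D']; [assumption|]. lra. }
    apply (Hdd s t). auto.
  - intros t (Da & Db & Dc). apply (Hdd t t).
    split; [|split]; eapply uniqueness_limite; eauto using derivable_pt_lim_peval.
Qed.

Definition lipschitz_on_box (n L : R) (p : R -> R -> R) : Prop :=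
  forall s t s' t', Rabs s <= n -> Rabs t <= n -> Rabs s' <= n -> Rabs t' <= n ->
  Rabs (p s t - p s' t') <= L * (Rabs (s - s') + Rabs (t - t')).

Definition locally_lipschitz2 (p : R -> R -> R) : Prop :=
  forall n, 0 < n -> exists L, 0 <= L /\ lipschitz_on_box n L p.

Lemma lipschitz_on_box_weaken (n L L' : R) (p : R -> R -> R) :
  L <= L' -> lipschitz_on_box n L p -> lipschitz_on_box n L' p.
Proof.
  intros HL Hp s t s' t' Hs Ht Hs' Ht'.
  eapply Rle_trans; [apply Hp; assumption|].
  apply Rmult_le_compat_r; [|exact HL].
  pose proof (Rabs_pos (s - s')); pose proof (Rabs_pos (t - t')). lra.
Qed.

Lemma lipschitz_on_box_bound (n L : R) (p : R -> R -> R) :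
  0 <= L -> lipschitz_on_box n L p ->
  forall s t, Rabs s <= n -> Rabs t <= n -> Rabs (p s t) <= Rabs (p 0 0) + 2 * n * L.
Proof.
  intros HL Hp s t Hs Ht.
  assert (H0 : Rabs 0 <= n) by (rewrite Rabs_R0; pose proof (Rabs_pos s); lra).
  pose proof (Hp s t 0 0 Hs Ht H0 H0) as D. rewrite !Rminus_0_r in D.
  pose proof (Rabs_triang_inv (p s t) (p 0 0)).
  assert (L * (Rabs s + Rabs t) <= L * (2 * n)) by (apply Rmult_le_compat_l; lra).
  lra.
Qed.

Lemma locally_lipschitz2_const (c : R) : locally_lipschitz2 (fun _ _ => c).
Proof.
  intros n _. exists 0. split; [lra|]. intros s t s' t' _ _ _ _.
  rewrite Rminus_diag, Rabs_R0, Rmult_0_l. lra.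
Qed.

Lemma locally_lipschitz2_fst : locally_lipschitz2 (fun s _ => s).
Proof.
  intros n _. exists 1. split; [lra|]. intros s t s' t' _ _ _ _.
  pose proof (Rabs_pos (t - t')). lra.
Qed.

Lemma locally_lipschitz2_snd : locally_lipschitz2 (fun _ t => t).
Proof.
  intros n _. exists 1. split; [lra|]. intros s t s' t' _ _ _ _.
  pose proof (Rabs_pos (s - s')). lra.
Qed.

Lemma locally_lipschitz2_plus (p q : R -> R -> R) :
  locally_lipschitz2 p -> locally_lipschitz2 q ->
  locally_lipschitz2 (fun s t => p s t + q s t).
Proof.
  intros Hp Hq n Hn.
  destruct (Hp n Hn) as (Lp & HLp & Lip_p). destruct (Hq n Hn) as (Lq & HLq & Lip_q).
  exists (Lp + Lq). split; [lra|]. intros s t s' t' Hs Ht Hs' Ht'.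
  replace (p s t + q s t - (p s' t' + q s' t'))
    with ((p s t - p s' t') + (q s t - q s' t')) by ring.
  eapply Rle_trans; [apply Rabs_triang|].
  pose proof (Lip_p s t s' t' Hs Ht Hs' Ht'). pose proof (Lip_q s t s' t' Hs Ht Hs' Ht').
  lra.
Qed.

Lemma locally_lipschitz2_mult (p q : R -> R -> R) :
  locally_lipschitz2 p -> locally_lipschitz2 q ->
  locally_lipschitz2 (fun s t => p s t * q s t).
Proof.
  intros Hp Hq n Hn.
  destruct (Hp n Hn) as (Lp & HLp & Lip_p). destruct (Hq n Hn) as (Lq & HLq & Lip_q).
  set (Bp := Rabs (p 0 0) + 2 * n * Lp). set (Bq := Rabs (q 0 0) + 2 * n * Lq).
  assert (HBp : 0 <= Bp) by (unfold Bp; pose proof (Rabs_pos (p 0 0)); nra).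
  assert (HBq : 0 <= Bq) by (unfold Bq; pose proof (Rabs_pos (q 0 0)); nra).
  exists (Bp * Lq + Lp * Bq). split; [nra|]. intros s t s' t' Hs Ht Hs' Ht'.
  replace (p s t * q s t - p s' t' * q s' t')
    with (p s t * (q s t - q s' t') + (p s t - p s' t') * q s' t') by ring.
  eapply Rle_trans; [apply Rabs_triang|]. rewrite !Rabs_mult.
  set (D := Rabs (s - s') + Rabs (t - t')).
  assert (HD : 0 <= D) by (unfold D; pose proof (Rabs_pos (s - s')); pose proof (Rabs_pos (t - t')); lra).
  assert (Rabs (p s t) * Rabs (q s t - q s' t') <= Bp * (Lq * D)).
  { apply Rmult_le_compat; auto using Rabs_pos.
    apply (lipschitz_on_box_bound n Lp); assumption. }
  assert (Rabs (p s t - p s' t') * Rabs (q s' t') <= (Lp * D) * Bq).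
  { apply Rmult_le_compat; auto using Rabs_pos.
    apply (lipschitz_on_box_bound n Lq); assumption. }
  lra.
Qed.

Lemma locally_lipschitz2_peval (l : list R) : locally_lipschitz2 (fun s _ => peval l s).
Proof.
  induction l as [|c l IH]; [apply (locally_lipschitz2_const 0)|].
  apply (locally_lipschitz2_plus (fun _ _ => c) (fun s t => s * peval l s)).
  - apply locally_lipschitz2_const.
  - apply (locally_lipschitz2_mult (fun s _ => s)); [apply locally_lipschitz2_fst|exact IH].
Qed.

Lemma locally_lipschitz2_divdiff (l : list R) : locally_lipschitz2 (divdiff l).
Proof.
  induction l as [|c l IH]; [apply (locally_lipschitz2_const 0)|].
  apply (locally_lipschitz2_plus (fun s _ => peval l s) (fun s t => t * divdiff l s t)).
  - apply locally_lipschitz2_peval.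
  - apply (locally_lipschitz2_mult (fun _ t => t)); [apply locally_lipschitz2_snd|exact IH].
Qed.

Record cube := Cube { center1 : R; center2 : R; center3 : R; radius : R }.

Definition in_cube (c : cube) (y1 y2 y3 : R) : Prop :=
  Rabs (y1 - center1 c) <= radius c /\ Rabs (y2 - center2 c) <= radius c /\
  Rabs (y3 - center3 c) <= radius c.

Definition subcube (c' c : cube) : Prop :=
  Rabs (center1 c' - center1 c) + radius c' <= radius c /\
  Rabs (center2 c' - center2 c) + radius c' <= radius c /\
  Rabs (center3 c' - center3 c) + radius c' <= radius c.

Definition grid_cube (o1 o2 o3 h : R) (i j k : nat) : cube :=
  Cube (o1 + INR i * h) (o2 + INR j * h) (o3 + INR k * h) (h / 4).

Lemma grid_index_unique (o h y y' : R) (i i' : nat) : 0 < h ->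
  Rabs (y - (o + INR i * h)) <= h / 4 -> Rabs (y' - (o + INR i' * h)) <= h / 4 ->
  Rabs (y - y') < h / 2 -> i = i'.
Proof.
  intros Hh Hy Hy' Hyy'.
  assert (Hii' : Rabs ((INR i - INR i') * h) < h).
  { replace ((INR i - INR i') * h)
      with (- (y - (o + INR i * h)) + (y - y') + (y' - (o + INR i' * h))) by ring.
    pose proof (Rabs_triang (- (y - (o + INR i * h)) + (y - y')) (y' - (o + INR i' * h))).
    pose proof (Rabs_triang (- (y - (o + INR i * h))) (y - y')).
    rewrite Rabs_Ropp in *. lra. }
  rewrite Rabs_mult, (Rabs_right h) in Hii' by lra.
  assert (Hlt : Rabs (INR i - INR i') < 1) by (apply Rmult_lt_reg_r with h; lra).
  destruct (Nat.lt_trichotomy i i') as [H|[H|H]]; [exfalso| exact H |exfalso];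
    apply le_INR in H; rewrite S_INR in H;
    [rewrite Rabs_left1 in Hlt | rewrite Rabs_right in Hlt]; lra.
Qed.

Lemma nat_cell_of_interval (N : nat) (u : R) : (1 <= N)%nat -> 0 <= u <= INR N ->
  exists a, (a < N)%nat /\ INR a <= u <= INR a + 1.
Proof.
  induction N as [|N IH]; intros HN Hu; [lia|].
  destruct (Nat.eq_dec N 0) as [->|HN0].
  - exists 0%nat. simpl in Hu. split; [lia|]. simpl. lra.
  - rewrite S_INR in Hu. destruct (Rle_lt_dec u (INR N)) as [Hle|Hlt].
    + destruct (IH ltac:(lia) ltac:(lra)) as (a & Ha & Hau). exists a. split; [lia|lra].
    + exists N. split; [lia|lra].
Qed.

Lemma interval_cell_index (n : R) (N : nat) : 0 < n -> (1 <= N)%nat ->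
  exists idx : R -> nat, forall s s', Rabs s <= n -> Rabs s' <= n ->
    (idx s < N)%nat /\ (idx s = idx s' -> Rabs (s - s') <= 2 * n / INR N).
Proof.
  intros Hn HN.
  assert (HNpos : 0 < INR N) by (apply lt_0_INR; lia).
  set (scale := fun s => (s + n) / (2 * n) * INR N).
  assert (Hscale : forall s, Rabs s <= n -> 0 <= scale s <= INR N).
  { intros s Hs. unfold scale.
    assert (-n <= s <= n) by (unfold Rabs in Hs; destruct Rcase_abs in Hs; lra).
    assert (Hw : (s + n) / (2 * n) * (2 * n) = s + n) by (field; lra).
    assert (0 <= (s + n) / (2 * n) <= 1) by nra.
    nra. }
  destruct (choice (fun s a => Rabs s <= n -> (a < N)%nat /\ INR a <= scale s <= INR a + 1))
    as [idx Hidx].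
  { intro s. destruct (classic (Rabs s <= n)) as [Hs|Hs].
    - destruct (nat_cell_of_interval N (scale s) HN (Hscale s Hs)) as (a & Ha). now exists a.
    - exists 0%nat. tauto. }
  exists idx. intros s s' Hs Hs'.
  destruct (Hidx s Hs) as [Hlt Hcell]. destruct (Hidx s' Hs') as [_ Hcell'].
  split; [exact Hlt|]. intro E. rewrite <- E in Hcell'.
  replace (s - s') with ((scale s - scale s') * (2 * n / INR N))
    by (unfold scale; field; lra).
  rewrite Rabs_mult, (Rabs_right (2 * n / INR N))
    by (apply Rle_ge, Rlt_le, Rdiv_lt_0_compat; lra).
  assert (Rabs (scale s - scale s') <= 1) by (apply Rabs_le; lra).
  assert (0 < 2 * n / INR N) by (apply Rdiv_lt_0_compat; lra).
  nra.
Qed.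

Lemma NoDup_list_prod {A B : Type} (l : list A) (l' : list B) :
  NoDup l -> NoDup l' -> NoDup (list_prod l l').
Proof.
  induction 1 as [|a l Ha Hl IH]; intros Hl'; simpl; [constructor|].
  apply NoDup_app.
  - apply NoDup_map_NoDup_ForallPairs; auto. intros x y _ _ E. now inversion E.
  - now apply IH.
  - intros [x y] Hx Hy. apply in_map_iff in Hx. destruct Hx as (z & Ez & _).
    inversion Ez; subst. apply in_prod_iff in Hy. tauto.
Qed.

Lemma grid_injection_card_le (M N : nat) (f : nat * nat * nat -> nat * nat) :
  (forall i j k, (i < M)%nat -> (j < M)%nat -> (k < M)%nat ->
     (fst (f (i, j, k)) < N)%nat /\ (snd (f (i, j, k)) < N)%nat) ->
  (forall i j k i' j' k', (i < M)%nat -> (j < M)%nat -> (k < M)%nat ->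
     (i' < M)%nat -> (j' < M)%nat -> (k' < M)%nat ->
     f (i, j, k) = f (i', j', k') -> i = i' /\ j = j' /\ k = k') ->
  (M * M * M <= N * N)%nat.
Proof.
  intros Hrange Hinj.
  set (grid := list_prod (list_prod (seq 0 M) (seq 0 M)) (seq 0 M)).
  assert (Hgrid : forall i j k, In (i, j, k) grid -> (i < M /\ j < M /\ k < M)%nat).
  { intros i j k Hx. unfold grid in Hx. rewrite !in_prod_iff, !in_seq in Hx. lia. }
  assert (Hnodup : NoDup (map f grid)).
  { apply NoDup_map_NoDup_ForallPairs.
    - intros [[i j] k] [[i' j'] k'] Hx Hx' E.
      apply Hgrid in Hx; apply Hgrid in Hx'.
      destruct (Hinj i j k i' j' k') as (-> & -> & ->); tauto.
    - unfold grid; repeat apply NoDup_list_prod; apply seq_NoDup. }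
  assert (Hincl : incl (map f grid) (list_prod (seq 0 N) (seq 0 N))).
  { intros y Hy. apply in_map_iff in Hy. destruct Hy as ([[i j] k] & <- & Hx).
    apply Hgrid in Hx. destruct (Hrange i j k) as [Hfst Hsnd]; try tauto.
    destruct (f (i, j, k)). apply in_prod; apply in_seq; simpl in *; lia. }
  pose proof (NoDup_incl_length Hnodup Hincl) as Hlen.
  unfold grid in Hlen. rewrite length_map, !length_prod, !length_seq in Hlen. exact Hlen.
Qed.

Lemma grid_cube_subcube (c : cube) (M : nat) (h : R) (i j k : nat) :
  0 < h -> INR M * h = radius c -> (i < M)%nat -> (j < M)%nat -> (k < M)%nat ->
  subcube (grid_cube (center1 c - radius c / 2) (center2 c - radius c / 2)
             (center3 c - radius c / 2) h i j k) c.
Proof.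
  intros Hh HMh Hi Hj Hk.
  assert (Hoffset : forall q (a : nat), (a < M)%nat ->
    Rabs (q - radius c / 2 + INR a * h - q) + h / 4 <= radius c).
  { intros q a Ha.
    assert (0 <= INR a * h) by (apply Rmult_le_pos; [apply pos_INR|lra]).
    assert (INR a + 1 <= INR M) by (rewrite <- S_INR; apply le_INR; lia).
    apply Rle_trans with (radius c / 2 + h / 4); [|nra].
    apply Rplus_le_compat_r, Rabs_le. nra. }
  unfold subcube, grid_cube; simpl. auto.
Qed.

Section BoxImage.

Variables (p1 p2 p3 : R -> R -> R) (n L : R).
Hypotheses (Hn : 0 < n) (HL : 0 <= L).
Hypotheses (Lip1 : lipschitz_on_box n L p1) (Lip2 : lipschitz_on_box n L p2)
  (Lip3 : lipschitz_on_box n L p3).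

(* Points of the box in a common cell of an [N x N] subdivision have images closer than
   [h / 2], so they cannot reach two different cubes of the grid. *)
Lemma box_image_meets_grid_card_le (M N : nat) (o1 o2 o3 h : R) :
  (1 <= N)%nat -> 0 < h -> 2 * L * (2 * n / INR N) < h / 2 ->
  (forall i j k, (i < M)%nat -> (j < M)%nat -> (k < M)%nat ->
     exists s t, Rabs s <= n /\ Rabs t <= n /\
       in_cube (grid_cube o1 o2 o3 h i j k) (p1 s t) (p2 s t) (p3 s t)) ->
  (M * M * M <= N * N)%nat.
Proof.
  intros HN Hh Hsmall Hmeet.
  destruct (choice (fun (x : nat * nat * nat) (st : R * R) =>
      let '(i, j, k) := x in (i < M)%nat -> (j < M)%nat -> (k < M)%nat ->
      Rabs (fst st) <= n /\ Rabs (snd st) <= n /\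
      in_cube (grid_cube o1 o2 o3 h i j k)
        (p1 (fst st) (snd st)) (p2 (fst st) (snd st)) (p3 (fst st) (snd st))))
    as [w Hw].
  { intros [[i j] k].
    destruct (classic ((i < M)%nat /\ (j < M)%nat /\ (k < M)%nat)) as [(Hi & Hj & Hk)|Hout].
    - destruct (Hmeet i j k Hi Hj Hk) as (s & t & Hst). now exists (s, t).
    - exists (0, 0). intros Hi Hj Hk. tauto. }
  destruct (interval_cell_index n N Hn HN) as [idx Hidx].
  apply (grid_injection_card_le M N (fun x => (idx (fst (w x)), idx (snd (w x))))).
  - intros i j k Hi Hj Hk. destruct (Hw (i, j, k) Hi Hj Hk) as (Hs & Ht & _).
    split; [apply (Hidx _ _ Hs Hs) | apply (Hidx _ _ Ht Ht)].
  - intros i j k i' j' k' Hi Hj Hk Hi' Hj' Hk' E. injection E as Es Et.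
    destruct (Hw (i, j, k) Hi Hj Hk) as (Hs & Ht & C1 & C2 & C3).
    destruct (Hw (i', j', k') Hi' Hj' Hk') as (Hs' & Ht' & C1' & C2' & C3').
    simpl in C1, C2, C3, C1', C2', C3'.
    pose proof (proj2 (Hidx _ _ Hs Hs') Es) as Ds.
    pose proof (proj2 (Hidx _ _ Ht Ht') Et) as Dt.
    assert (Hclose : forall p, lipschitz_on_box n L p ->
      Rabs (p (fst (w (i, j, k))) (snd (w (i, j, k))) -
            p (fst (w (i', j', k'))) (snd (w (i', j', k')))) < h / 2).
    { intros p Hp. eapply Rle_lt_trans; [apply Hp; assumption|]. nra. }
    split; [|split]; eapply grid_index_unique; eauto.
Qed.

Lemma box_image_misses_subcube (c : cube) : 0 < radius c ->
  exists c', 0 < radius c' /\ subcube c' c /\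
    forall s t, Rabs s <= n -> Rabs t <= n -> ~ in_cube c' (p1 s t) (p2 s t) (p3 s t).
Proof.
  intro Hr. set (r := radius c) in *.
  destruct (INR_unbounded (8 * n * L / r)) as [K HK].
  assert (HKpos : 0 < INR K)
    by (eapply Rle_lt_trans; [|exact HK]; apply Rmult_le_pos;
        [nra|apply Rlt_le, Rinv_0_lt_compat, Hr]).
  assert (HK1 : (1 <= K)%nat) by (destruct K; [simpl in HKpos; lra|lia]).
  assert (HKr : 8 * n * L < INR K * r).
  { apply (Rmult_lt_compat_r r) in HK; [|exact Hr].
    replace (8 * n * L / r * r) with (8 * n * L) in HK by (field; lra). exact HK. }
  (* [M^3 <= N^2 = K^2 M^2] would force [M <= K^2]. *)
  set (M := (K * K + 1)%nat). set (N := (K * M)%nat).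
  assert (HMpos : 0 < INR M) by (apply lt_0_INR; unfold M; lia).
  set (h := r / INR M).
  assert (Hh : 0 < h) by (apply Rdiv_lt_0_compat; assumption).
  assert (HMh : INR M * h = r) by (unfold h; field; lra).
  apply NNPP. intro Hno.
  assert (Hcard : (M * M * M <= N * N)%nat).
  { apply (box_image_meets_grid_card_le M N (center1 c - r / 2) (center2 c - r / 2)
             (center3 c - r / 2) h).
    - unfold N, M. nia.
    - exact Hh.
    - unfold N. rewrite mult_INR.
      replace (2 * L * (2 * n / (INR K * INR M)))
        with (8 * n * L * / (2 * INR K * INR M)) by (field; lra).
      replace (h / 2) with (INR K * r * / (2 * INR K * INR M)) by (unfold h; field; lra).
      apply Rmult_lt_compat_r; [apply Rinv_0_lt_compat; nra|exact HKr].
    - intros i j k Hi Hj Hk. apply NNPP. intro Hmiss. apply Hno.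
      exists (grid_cube (center1 c - r / 2) (center2 c - r / 2) (center3 c - r / 2) h i j k).
      split; [simpl; lra|]. split; [apply (grid_cube_subcube c M h); assumption|].
      intros s t Hs Ht Hin. apply Hmiss. now exists s, t. }
  unfold N, M in Hcard. nia.
Qed.

End BoxImage.

Lemma nested_intervals_common_point (a b : nat -> R) :
  (forall k, a k <= a (S k)) -> (forall k, b (S k) <= b k) -> (forall k, a k <= b k) ->
  exists x, forall k, a k <= x <= b k.
Proof.
  intros Ha Hb Hab.
  assert (Hle : forall k m, a k <= b m).
  { assert (Ham : forall k m, (k <= m)%nat -> a k <= a m).
    { intros k m H; induction H; [lra|]. specialize (Ha m); lra. }
    assert (Hbm : forall k m, (k <= m)%nat -> b m <= b k).
    { intros k m H; induction H; [lra|]. specialize (Hb m); lra. }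
    intros k m. destruct (Nat.le_ge_cases k m) as [H|H].
    - specialize (Ham _ _ H). specialize (Hab m). lra.
    - specialize (Hbm _ _ H). specialize (Hab k). lra. }
  destruct (completeness (fun x => exists k, x = a k)) as [x [Hub Hlub]].
  - exists (b 0%nat). intros y [k ->]. apply Hle.
  - exists (a 0%nat), 0%nat. reflexivity.
  - exists x. intro k. split.
    + apply Hub. now exists k.
    + apply Hlub. intros y [m ->]. apply Hle.
Qed.

Lemma nested_cubes_common_point (cs : nat -> cube) :
  (forall k, 0 <= radius (cs k)) -> (forall k, subcube (cs (S k)) (cs k)) ->
  exists y1 y2 y3, forall k, in_cube (cs k) y1 y2 y3.
Proof.
  intros Hpos Hsub.
  assert (Hcoord : forall center : cube -> R,
    (forall k, Rabs (center (cs (S k)) - center (cs k)) + radius (cs (S k)) <= radius (cs k)) ->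
    exists y, forall k, Rabs (y - center (cs k)) <= radius (cs k)).
  { intros center Hnest.
    destruct (nested_intervals_common_point (fun k => center (cs k) - radius (cs k))
                (fun k => center (cs k) + radius (cs k))) as [y Hy];
      try (intro k; specialize (Hnest k); specialize (Hpos k);
           unfold Rabs in Hnest; destruct Rcase_abs in Hnest; lra).
    exists y. intro k. specialize (Hy k). apply Rabs_le. lra. }
  destruct (Hcoord center1 (fun k => proj1 (Hsub k))) as [y1 Y1].
  destruct (Hcoord center2 (fun k => proj1 (proj2 (Hsub k)))) as [y2 Y2].
  destruct (Hcoord center3 (fun k => proj2 (proj2 (Hsub k)))) as [y3 Y3].
  exists y1, y2, y3. intro k. unfold in_cube. auto.
Qed.

Lemma locally_lipschitz2_image_avoids (p1 p2 p3 : R -> R -> R) (c : cube) :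
  locally_lipschitz2 p1 -> locally_lipschitz2 p2 -> locally_lipschitz2 p3 ->
  0 < radius c ->
  exists y1 y2 y3, in_cube c y1 y2 y3 /\
    forall s t, ~ (p1 s t = y1 /\ p2 s t = y2 /\ p3 s t = y3).
Proof.
  intros Lip1 Lip2 Lip3 Hr.
  destruct (choice (fun (kc : nat * cube) c' => 0 < radius (snd kc) ->
      0 < radius c' /\ subcube c' (snd kc) /\
      forall s t, Rabs s <= INR (fst kc) + 1 -> Rabs t <= INR (fst kc) + 1 ->
        ~ in_cube c' (p1 s t) (p2 s t) (p3 s t)))
    as [shrink Hshrink].
  { intros [k c0]. destruct (classic (0 < radius c0)) as [Hr0|Hr0]; [|now exists c0].
    assert (Hn : 0 < INR k + 1) by (pose proof (pos_INR k); lra).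
    destruct (Lip1 _ Hn) as (L1 & HL1 & A1). destruct (Lip2 _ Hn) as (L2 & HL2 & A2).
    destruct (Lip3 _ Hn) as (L3 & HL3 & A3).
    set (L := L1 + L2 + L3).
    assert (Hweak : forall Li p, Li <= L -> lipschitz_on_box (INR k + 1) Li p ->
                                 lipschitz_on_box (INR k + 1) L p)
      by (intros; eapply lipschitz_on_box_weaken; eassumption).
    destruct (box_image_misses_subcube p1 p2 p3 (INR k + 1) L Hn ltac:(unfold L; lra)
                (Hweak L1 p1 ltac:(unfold L; lra) A1) (Hweak L2 p2 ltac:(unfold L; lra) A2)
                (Hweak L3 p3 ltac:(unfold L; lra) A3) c0 Hr0) as [c' Hc'].
    now exists c'. }
  set (cs := nat_rect (fun _ => cube) c (fun k ck => shrink (k, ck))).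
  assert (Hpos : forall k, 0 < radius (cs k)).
  { induction k as [|k IH]; [exact Hr|]. apply (Hshrink (k, cs k) IH). }
  destruct (nested_cubes_common_point cs (fun k => Rlt_le _ _ (Hpos k))
              (fun k => proj1 (proj2 (Hshrink (k, cs k) (Hpos k)))))
    as (y1 & y2 & y3 & Hy).
  exists y1, y2, y3. split; [exact (Hy 0%nat)|].
  intros s t (E1 & E2 & E3).
  destruct (INR_unbounded (Rabs s + Rabs t)) as [k Hk].
  pose proof (Rabs_pos s); pose proof (Rabs_pos t).
  apply (proj2 (proj2 (Hshrink (k, cs k) (Hpos k))) s t); simpl; try lra.
  rewrite E1, E2, E3. exact (Hy (S k)).
Qed.

Definition sub_slope (x : R) (l : list R) : list R :=
  match l with
  | c0 :: c1 :: l' => c0 :: (c1 - x) :: l'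
  | _ => l
  end.

Lemma length_sub_slope (x : R) (l : list R) : length (sub_slope x l) = length l.
Proof. destruct l as [|? [|? ?]]; reflexivity. Qed.

Lemma divdiff_sub_slope (x : R) (l : list R) (s t : R) : (2 <= length l)%nat ->
  divdiff (sub_slope x l) s t = divdiff l s t - x.
Proof. intro H. destruct l as [|c0 [|c1 l]]; simpl in *; [lia|lia|ring]. Qed.

Lemma sqdist_diag (l : list R) : sqdist l l = 0.
Proof. induction l as [|c l IH]; simpl; [reflexivity|]. rewrite IH. ring. Qed.

Lemma sqdist_sub_slope (x : R) (l : list R) : (2 <= length l)%nat ->
  sqdist l (sub_slope x l) = x ^ 2.
Proof.
  intro H. destruct l as [|c0 [|c1 l]]; simpl in *; try lia. rewrite sqdist_diag. ring.
Qed.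

Lemma nth_sub_slope_neq0 (x : R) (l : list R) (k : nat) :
  nth k l 0 <> 0 -> Rabs x < Rabs (nth k l 0) -> nth k (sub_slope x l) 0 <> 0.
Proof.
  intros Hk Hx. destruct l as [|c0 [|c1 l]]; try exact Hk.
  destruct k as [|[|k]]; try exact Hk. simpl in *. intro E.
  replace c1 with x in Hx by lra. lra.
Qed.

Lemma dist3_diag (a b c : list R) : dist3 a b c a b c = 0.
Proof. unfold dist3. rewrite !sqdist_diag, !Rplus_0_r. exact sqrt_0. Qed.

Lemma dist3_sub_slope (a b c : list R) (x1 x2 x3 eps : R) :
  (2 <= length a)%nat -> (2 <= length b)%nat -> (2 <= length c)%nat -> 0 < eps ->
  Rabs x1 <= eps / 2 -> Rabs x2 <= eps / 2 -> Rabs x3 <= eps / 2 ->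
  dist3 a b c (sub_slope x1 a) (sub_slope x2 b) (sub_slope x3 c) < eps.
Proof.
  intros Ha Hb Hc Heps H1 H2 H3. unfold dist3. rewrite !sqdist_sub_slope by assumption.
  rewrite <- (sqrt_pow2 eps) by lra.
  rewrite <- (pow2_abs x1), <- (pow2_abs x2), <- (pow2_abs x3).
  pose proof (Rabs_pos x1); pose proof (Rabs_pos x2); pose proof (Rabs_pos x3).
  apply sqrt_lt_1; nra.
Qed.

Lemma in_C_2_knot (a b c : list R) : in_C 2 a b c -> is_polynomial_knot a b c.
Proof.
  intros ((_ & Lb & _) & _ & Nb & _).
  apply divdiff_nonvanishing_knot. intros s t (_ & Db & _).
  destruct b as [|b0 [|b1 [|? ?]]]; simpl in Lb, Nb, Db; try lia. lra.
Qed.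

Theorem mainTheorem12 :
  forall d : nat, (2 <= d)%nat ->
  forall a b c : list R, in_C d a b c ->
  forall eps : R, 0 < eps ->
  exists a' b' c' : list R, in_Q d a' b' c' /\ dist3 a b c a' b' c' < eps.
Proof.
  intros d Hd a b c HC eps Heps.
  destruct (Nat.eq_dec d 2) as [->|Hd3].
  { exists a, b, c. split; [split; [exact HC|apply in_C_2_knot, HC]|].
    rewrite dist3_diag. exact Heps. }
  destruct HC as [(La & Lb & Lc) (Na & Nb & Nc)].
  set (r := Rmin eps (Rmin (Rabs (nth (d - 2) a 0))
                           (Rmin (Rabs (nth (d - 1) b 0)) (Rabs (nth d c 0))))).
  assert (Hr : 0 < r) by (repeat apply Rmin_glb_lt; try apply Rabs_pos_lt; assumption).
  destruct (locally_lipschitz2_image_avoids (divdiff a) (divdiff b) (divdiff c)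
              (Cube 0 0 0 (r / 2)) (locally_lipschitz2_divdiff a)
              (locally_lipschitz2_divdiff b) (locally_lipschitz2_divdiff c) ltac:(simpl; lra))
    as (x1 & x2 & x3 & Hx & Havoid).
  destruct Hx as (H1 & H2 & H3). simpl in H1, H2, H3. rewrite Rminus_0_r in H1, H2, H3.
  assert (Re : r <= eps) by apply Rmin_l.
  assert (Ra : r <= Rabs (nth (d - 2) a 0)) by (eapply Rle_trans; [apply Rmin_r|apply Rmin_l]).
  assert (Rb : r <= Rabs (nth (d - 1) b 0))
    by (eapply Rle_trans; [apply Rmin_r|]; eapply Rle_trans; [apply Rmin_r|apply Rmin_l]).
  assert (Rc : r <= Rabs (nth d c 0))
    by (eapply Rle_trans; [apply Rmin_r|]; eapply Rle_trans; [apply Rmin_r|apply Rmin_r]).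
  exists (sub_slope x1 a), (sub_slope x2 b), (sub_slope x3 c). split; [split; [split|]|].
  - split; [|split]; rewrite length_sub_slope; assumption.
  - split; [|split]; apply nth_sub_slope_neq0; (assumption || lra).
  - apply divdiff_nonvanishing_knot. intros s t Hzero. apply (Havoid s t).
    rewrite !divdiff_sub_slope in Hzero by lia. lra.
  - apply dist3_sub_slope; (lia || lra).
Qed.
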